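(* Let $q$ be a power of $2$, $c\in\mathbb{F}_q^*$, $f(X)=X(X^{q-1}-c)^{q+1}$ on $\mathbb{F}_{q^2}$, with $a,\beta,g,L_{[u:v]},\mathbb{P}^1$ as in the context. For $L_{[u:v]}\in\mathbb{P}^1$, $g(u,v)=0$ if and only if $c=1$ and $v=0$. Moreover, for each $L_{[u:v]}\in\mathbb{P}^1$ with $g(u,v)\neq0$, the set $L_{[u:v]}\setminus\{0\}$ is the union of exactly $\frac{q-1}{d}$ cycles of length $d$ in $\mathcal{G}(f)$, where $d$ is the multiplicative order of $g(u,v)$ in $\mathbb{F}_q^*$.
   Context: $a\in\mathbb{F}_q$ with $\operatorname{Tr}(a)=1$ (absolute trace to $\mathbb{F}_2$), $\beta\in\mathbb{F}_{q^2}$ with $\beta^2+\beta+a=0$; every element of $\mathbb{F}_{q^2}$ is uniquely $x+y\beta$, $x,y\in\mathbb{F}_q$. For $(x,y)\neq(0,0)$, $g(x,y)=c^2+1+\frac{cy^2}{x^2+xy+y^2a}\in\mathbb{F}_q$, invariant under scaling $(x,y)$ by $\mathbb{F}_q^*$. For $(u,v)\in\mathbb{F}_q^2\setminus\{(0,0)\}$, $L_{[u:v]}=\{\lambda(u+v\beta):\lambda\in\mathbb{F}_q\}$ and $\mathbb{P}^1$ is the set of these $q+1$ lines. $\mathcal{G}(f)$ is the functional graph (vertices $\mathbb{F}_{q^2}$, edges $\langle x,f(x)\rangle$); a cycle of length $n$ consists of distinct $\alpha,f(\alpha),\dots,f^{(n-1)}(\alpha)$ with $f^{(n)}(\alpha)=\alpha$.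 *)

From HB Require Import structures.
From mathcomp Require Import all_boot all_order all_algebra.
Set Implicit Arguments. Unset Strict Implicit. Unset Printing Implicit Defensive.
Import GRing.Theory.
Local Open Scope ring_scope.

(* F_{q^2} is modelled as a finite field L with #|L| = q^2, q = 2^k;
   F_q is the subfield {x in L | x^q = x}. *)

Definition inFq (L : fieldType) (q : nat) (x : L) : Prop := x ^+ q = x.

Definition absTr (L : fieldType) (k : nat) (x : L) : L := \sum_(i < k) x ^+ (2 ^ i).

Definition fmap (L : fieldType) (q : nat) (c : L) (x : L) : L :=
  x * (x ^+ q.-1 - c) ^+ q.+1.

Definition gfun (L : fieldType) (c a x y : L) : L :=
  c ^+ 2 + 1 + c * y ^+ 2 / (x ^+ 2 + x * y + y ^+ 2 * a).

Definition line (L : finFieldType) (q : nat) (beta u v : L) : {set L} :=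
  [set z | [exists lam : L, (lam ^+ q == lam) && (z == lam * (u + v * beta))]].

Definition is_cycle_len (L : finFieldType) (f : L -> L) (n : nat) (S : {set L}) : Prop :=
  exists alpha : L,
    [/\ (0 < n)%N, iter n f alpha = alpha,
        uniq [seq iter i f alpha | i <- iota 0 n]
      & S = [set x | x \in [seq iter i f alpha | i <- iota 0 n]]].

Definition mult_order (L : fieldType) (x : L) (d : nat) : Prop :=
  [/\ (0 < d)%N, x ^+ d = 1 & forall n : nat, (0 < n)%N -> (n < d)%N -> x ^+ n != 1].

From mathcomp Require Import all_boot all_order all_algebra ring.
From mathcomp Require Import finfield.
Import GRing.Theory.
Local Open Scope ring_scope.
Set Implicit Arguments.
Unset Strict Implicit.
Unset Printing Implicit Defensive.

(* Write z := u + v beta.  Since Tr(a) = 1, Frobenius maps beta to beta + 1, so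
   z^q = z + v and hence z^(q-1) = z^q / z.  Expanding shows
   g(u,v) = (z^(q-1) - c)^(q+1), which lies in F_q.  If it vanishes then
   z^(q-1) = c is fixed by Frobenius, whence c^2 = 1, c = 1 and z^q = z, i.e.
   v = 0.  On the F_q-line through z,
   f(lam z) = lam z (z^(q-1) - c)^(q+1) = g(u,v) (lam z) because lam^(q-1) = 1,
   so f acts on the punctured line as multiplication by g(u,v); its orbits are
   the cosets of the group generated by g(u,v), each a cycle of length d. *)

Lemma mult_order_neq0 (L : fieldType) (g : L) (d : nat) :
  mult_order g d -> g != 0.
Proof.
case=> d_gt0 gd _; apply/eqP => g0.
by move: gd; rewrite g0 expr0n gtn_eqF // => /eqP; rewrite eq_sym oner_eq0.
Qed.

Lemma mult_order_expr_inj (L : fieldType) (g : L) (d i j : nat) :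
  mult_order g d -> (i < d)%N -> (j < d)%N -> g ^+ i = g ^+ j -> i = j.
Proof.
move=> ord_g lt_id lt_jd; have g0 := mult_order_neq0 ord_g.
case: ord_g => _ _ g_min.
wlog lt_ij : i j lt_id lt_jd / (i < j)%N => [hwlog eq_gij|eq_gij].
  case: (ltngtP i j) => [lt_ij|lt_ji|//]; first exact: hwlog.
  exact/esym/(hwlog j i).
have gji : g ^+ (j - i) = 1.
  by apply: (mulfI (expf_neq0 i g0)); rewrite -exprD subnKC ?mulr1 // ltnW.
have := g_min (j - i)%N; rewrite subn_gt0 lt_ij gji eqxx.
by rewrite (leq_ltn_trans (leq_subr _ _) lt_jd) => /(_ isT isT).
Qed.

Lemma card_cycle (L : finFieldType) (f : L -> L) (d : nat) (S : {set L}) :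
  is_cycle_len f d S -> #|S| = d.
Proof.
case=> alpha [_ _ uniq_orbit ->].
by rewrite cardsE (card_uniqP uniq_orbit) size_map size_iota.
Qed.

Section MulOrbits.

Variables (L : finFieldType) (f : L -> L) (g : L) (d : nat) (D : {set L}).
Hypotheses (ord_g : mult_order g d) (D0 : 0 \notin D)
  (fD : {in D, forall x, f x = x * g}) (mulgD : {in D, forall x, x * g \in D}).

Lemma mulXgD i : {in D, forall x, x * g ^+ i \in D}.
Proof.
elim: i => [|i IHi] x Dx; first by rewrite mulr1.
by rewrite exprS mulrCA mulrC mulgD ?IHi.
Qed.

Lemma iter_fD i : {in D, forall x, iter i f x = x * g ^+ i}.
Proof.
elim: i => [|i IHi] x Dx; first by rewrite mulr1.
by rewrite iterS IHi // fD ?mulXgD // exprSr mulrA.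
Qed.

Let orbit_rel x y := [exists i : 'I_d, y == x * g ^+ i].

Lemma orbit_rel_equiv : equivalence_rel orbit_rel.
Proof.
have [d_gt0 gd _] := ord_g.
move=> x y t; split.
  by apply/existsP; exists (Ordinal d_gt0); rewrite expr0 mulr1.
case/existsP => i /eqP ->; apply/idP/idP => /existsP[j /eqP ->]; apply/existsP.
  exists (Ordinal (ltn_pmod (j + d - i) d_gt0)).
  rewrite /= expr_mod // -mulrA -exprD subnKC; last first.
    exact: leq_trans (ltnW (ltn_ord i)) (leq_addl _ _).
  by rewrite exprD gd mulr1.
exists (Ordinal (ltn_pmod (i + j) d_gt0)).
by rewrite /= expr_mod // exprD mulrA.
Qed.

Lemma orbit_class_cycle S :
  S \in equivalence_partition orbit_rel D -> is_cycle_len f d S.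
Proof.
have [d_gt0 gd _] := ord_g.
case/imsetP => x Dx ->; have x0 : x != 0 by apply: contraNneq D0 => <-.
exists x; split => //; first by rewrite iter_fD // gd mulr1.
  rewrite map_inj_in_uniq ?iota_uniq // => i j.
  rewrite !mem_iota !add0n !iter_fD // => /andP[_ lt_id] /andP[_ lt_jd] eq_ij.
  exact: (mult_order_expr_inj ord_g lt_id lt_jd (mulfI x0 eq_ij)).
apply/setP => y; rewrite !inE /orbit_rel; apply/andP/mapP => [[_ /existsP[i /eqP ->]]|].
  by exists (val i); rewrite ?mem_iota ?add0n ?ltn_ord ?iter_fD.
case=> i; rewrite mem_iota add0n iter_fD // => /andP[_ lt_id] ->.
by split; [rewrite mulXgD | apply/existsP; exists (Ordinal lt_id)].
Qed.

Lemma mul_orbits_partition : exists C : {set {set L}},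
  [/\ (#|C| * d)%N = #|D|, forall S, S \in C -> is_cycle_len f d S
    & \bigcup_(S in C) S = D].
Proof.
have partD : partition (equivalence_partition orbit_rel D) D.
  by apply: equivalence_partitionP => x y t _ _ _; apply: orbit_rel_equiv.
exists (equivalence_partition orbit_rel D); split.
- rewrite (@card_uniform_partition _ d _ _ _ partD) // => S.
  by move/orbit_class_cycle/card_cycle.
- exact: orbit_class_cycle.
- by case/and3P: partD => /eqP.
Qed.

End MulOrbits.

Section Char2.

Variables (L : fieldType).
Hypothesis pchar2 : 2 \in [pchar L].

Lemma exprD_pchar2X k (x y : L) : (x + y) ^+ (2 ^ k) = x ^+ (2 ^ k) + y ^+ (2 ^ k).
Proof. by apply: exprDn_pchar; rewrite pnatX pnatE // pchar2. Qed.

Lemma sqr_sum (I : Type) (r : seq I) (F : I -> L) :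
  (\sum_(i <- r) F i) ^+ 2 = \sum_(i <- r) F i ^+ 2.
Proof.
elim: r => [|x r IHr]; first by rewrite !big_nil expr0n.
by rewrite !big_cons -IHr (exprD_pchar2X 1).
Qed.

Lemma root_ArtinSchreier_expr2X (a beta : L) : beta ^+ 2 + beta + a = 0 ->
  forall i, beta ^+ (2 ^ i) = beta + \sum_(j < i) a ^+ (2 ^ j).
Proof.
move=> beta_root; elim=> [|i IHi]; first by rewrite big_ord0 addr0 expr1.
rewrite expnSr exprM IHi (exprD_pchar2X 1) sqr_sum.
have -> : beta ^+ 2 = beta + a.
  by rewrite -[RHS](oppr_pchar2 pchar2); apply/eqP; rewrite -addr_eq0 addrA beta_root.
rewrite big_ord_recl expn0 expr1 -addrA; congr (_ + (_ + _)).
by apply: eq_bigr => j _; rewrite /bump /= expnSr exprM.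
Qed.

End Char2.

Section LineDynamics.

Variables (L : finFieldType) (k : nat) (c a beta : L).
Local Notation q := (2 ^ k)%N.
Hypotheses (cardL : #|L| = (q ^ 2)%N) (c_Fq : inFq q c) (tr_a : absTr k a = 1)
  (beta_root : beta ^+ 2 + beta + a = 0).

Lemma pchar2 : 2 \in [pchar L].
Proof. by apply: (@card_finPcharP _ _ (k * 2)); rewrite // cardL expnM. Qed.

Let q_gt0 : (0 < q)%N. Proof. by rewrite expn_gt0. Qed.

Lemma frobD (x y : L) : (x + y) ^+ q = x ^+ q + y ^+ q.
Proof. exact: exprD_pchar2X pchar2 k x y. Qed.

Lemma frobK (x : L) : (x ^+ q) ^+ q = x.
Proof. by rewrite -exprM mulnn -cardL expf_card. Qed.

Lemma frob_beta : beta ^+ q = beta + 1.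
Proof. by rewrite (root_ArtinSchreier_expr2X pchar2 beta_root) -[1]tr_a. Qed.

Lemma frob_point u v : inFq q u -> inFq q v -> (u + v * beta) ^+ q = u + v * beta + v.
Proof.
by move=> u_Fq v_Fq; rewrite frobD exprMn u_Fq v_Fq frob_beta mulrDr mulr1 addrA.
Qed.

Let Fq := [set x : L | x ^+ q == x].

(* (x, y) |-> x + y beta is a bijection from Fq^2 onto L, with inverse
   t |-> (t + y beta, y) where y := t^q + t. *)
Lemma card_Fq : #|Fq| = q.
Proof.
pose coord (p : L * L) := p.1 + p.2 * beta.
have coord_inj : {in setX Fq Fq &, injective coord}.
  case=> x y [x' y']; rewrite !inE /coord /=.
  move=> /andP[/eqP x_Fq /eqP y_Fq] /andP[/eqP x'_Fq /eqP y'_Fq] eq_xy.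
  have eq_frob : x + y * beta + y = x' + y' * beta + y'.
    by rewrite -!frob_point // eq_xy.
  by move: eq_frob; rewrite eq_xy => /addrI eq_y; move: eq_xy; rewrite eq_y => /addIr ->.
have coord_surj : coord @: setX Fq Fq = [set: L].
  apply/setP => t; rewrite !inE; apply/imsetP.
  pose y := t ^+ q + t; pose x := t + y * beta.
  have y_Fq : y ^+ q = y by rewrite frobD frobK addrC.
  exists (x, y); last by rewrite /coord /= addrK_pchar2 ?pchar2.
  rewrite !inE /= y_Fq eqxx andbT frobD exprMn y_Fq frob_beta.
  by rewrite mulrDr mulr1 addrCA [t ^+ q + _]addKr_pchar2 ?pchar2 // addrC.
have := card_in_imset coord_inj; rewrite coord_surj cardsT cardL cardsX mulnn.
by move/eqP; rewrite eqn_exp2r // => /eqP.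
Qed.

Section Point.

Variables u v : L.
Hypotheses (u_Fq : inFq q u) (v_Fq : inFq q v) (uv_neq0 : (u, v) != (0, 0)).
Local Notation z := (u + v * beta).
Local Notation g := (gfun c a u v).

Let frob_z : z ^+ q = z + v := frob_point u_Fq v_Fq.

Lemma point_neq0 : z != 0.
Proof.
apply: contra_neq uv_neq0 => z0.
have v0 : v = 0 by move: frob_z; rewrite z0 expr0n gtn_eqF // add0r.
by move: z0; rewrite v0 mul0r addr0 => ->.
Qed.

Lemma gfun_pointE : g = (z ^+ q.-1 - c) ^+ q.+1.
Proof.
have pchar2_0 := pcharf0 pchar2; have z0 := point_neq0.
have zq0 : z + v != 0 by rewrite -frob_z expf_neq0.
have sum_sqr : z ^+ 2 + (z + v) ^+ 2 = v ^+ 2.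
  have -> : z ^+ 2 + (z + v) ^+ 2 = v ^+ 2 + 2%:R * (z ^+ 2 + z * v) by ring.
  by rewrite pchar2_0 mul0r addr0.
have norm_z : z * (z + v) = u ^+ 2 + u * v + v ^+ 2 * a.
  have -> : z * (z + v) = u ^+ 2 + u * v + v ^+ 2 * a
      + 2%:R * (u * v * beta - v ^+ 2 * a) + v ^+ 2 * (beta ^+ 2 + beta + a) by ring.
  by rewrite beta_root pchar2_0 mul0r mulr0 !addr0.
have zq1 : z ^+ q.-1 = (z + v) / z.
  by apply: (mulfI z0); rewrite -exprS prednK // frob_z [RHS]mulrCA mulfV ?mulr1.
have zq1_frob : (z ^+ q.-1) ^+ q = z / (z + v).
  by rewrite zq1 expr_div_n frob_z -[X in X ^+ q]frob_z frobK.
rewrite exprSr (oppr_pchar2 pchar2) frobD zq1_frob c_Fq zq1.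
rewrite /gfun -norm_z -sum_sqr; field.
by rewrite z0 zq0.
Qed.

Lemma gfun_eq0 : g = 0 <-> c = 1 /\ v = 0.
Proof.
have z0 := point_neq0.
have zq1 : z ^+ q.-1 * z = z ^+ q by rewrite -exprSr prednK.
rewrite gfun_pointE; split => [/eqP|[-> v0]]; last first.
  suff -> : z ^+ q.-1 = 1 by rewrite subrr expr0n.
  by apply: (mulIf z0); rewrite zq1 mul1r frob_z v0 addr0.
rewrite expf_eq0 /= subr_eq0 => /eqP zq1_c; rewrite zq1_c in zq1.
have c_sqr : c ^+ 2 = 1.
  apply: (mulIf z0); rewrite mul1r -{2}(frobK z) -zq1 exprMn c_Fq -zq1.
  by rewrite mulrA -expr2.
have c1 : c = 1.
  have : (c + 1) ^+ 2 = 0.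
    by rewrite (exprD_pchar2X pchar2 1) expn1 c_sqr expr1n addrr_pchar2 ?pchar2.
  by move/eqP; rewrite expf_eq0 /= addr_eq0 (oppr_pchar2 pchar2) => /eqP.
split=> //; apply: (addrI z); rewrite addr0 -frob_z -zq1 c1 mul1r //.
Qed.

Lemma frob_gfun : g ^+ q = g.
Proof. by rewrite gfun_pointE exprAC exprSr frobK -exprS. Qed.

Lemma fmap_line (lam : L) : lam ^+ q = lam -> lam != 0 ->
  fmap q c (lam * z) = lam * z * g.
Proof.
move=> lam_Fq lam0.
have lam_q1 : lam ^+ q.-1 = 1.
  by apply: (mulfI lam0); rewrite -exprS prednK // lam_Fq mulr1.
by rewrite /fmap exprMn lam_q1 mul1r -gfun_pointE.
Qed.

Lemma line_setD0E :
  line q beta u v :\ 0 = (fun lam => lam * z) @: (Fq :\ 0).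
Proof.
apply/setP => x; rewrite !inE; apply/andP/imsetP => [[x0 /existsP[lam]]|[lam]].
  case/andP=> lam_Fq /eqP x_def; exists lam => //; rewrite !inE lam_Fq andbT.
  by apply: contraNneq x0 => lam0; rewrite x_def lam0 mul0r.
rewrite !inE => /andP[lam0 lam_Fq] ->; split; first by rewrite mulf_neq0 ?point_neq0.
by apply/existsP; exists lam; rewrite lam_Fq eqxx.
Qed.

Lemma card_line_setD0 : #|line q beta u v :\ 0| = q.-1.
Proof.
rewrite line_setD0E card_in_imset; last by move=> x y _ _; apply: (mulIf point_neq0).
have Fq0 : 0 \in Fq by rewrite inE expr0n gtn_eqF.
by rewrite -card_Fq (cardsD1 0 Fq) Fq0.
Qed.

Lemma fmap_line_setD0 : {in line q beta u v :\ 0, forall x, fmap q c x = x * g}.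
Proof.
move=> x; rewrite line_setD0E => /imsetP[lam]; rewrite !inE => /andP[lam0 /eqP lam_Fq] ->.
exact: fmap_line.
Qed.

Lemma mulg_line_setD0 : g != 0 ->
  {in line q beta u v :\ 0, forall x, x * g \in line q beta u v :\ 0}.
Proof.
move=> g0 x; rewrite line_setD0E => /imsetP[lam]; rewrite !inE => /andP[lam0 lam_Fq] ->.
apply/imsetP; exists (lam * g); last by rewrite mulrAC.
by rewrite !inE mulf_neq0 // exprMn (eqP lam_Fq) frob_gfun eqxx.
Qed.

End Point.

End LineDynamics.

Theorem mainTheorem9 (L : finFieldType) (k : nat) (c a beta : L) :
  (0 < k)%N -> #|L| = ((2 ^ k) ^ 2)%N ->
  inFq (2 ^ k) c -> c != 0 ->
  inFq (2 ^ k) a -> absTr k a = 1 ->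
  beta ^+ 2 + beta + a = 0 ->
  (forall u v : L, inFq (2 ^ k) u -> inFq (2 ^ k) v -> (u, v) != (0, 0) ->
     (gfun c a u v = 0 <-> (c = 1 /\ v = 0)))
  /\
  (forall u v : L, inFq (2 ^ k) u -> inFq (2 ^ k) v -> (u, v) != (0, 0) ->
     gfun c a u v != 0 ->
     forall d : nat, mult_order (gfun c a u v) d ->
       exists C : {set {set L}},
         [/\ #|C| = ((2 ^ k - 1) %/ d)%N,
             (forall S, S \in C -> is_cycle_len (fmap (2 ^ k) c) d S)
           & \bigcup_(S in C) S = line (2 ^ k) beta u v :\ 0]).
Proof.
move=> _ cardL c_Fq _ _ tr_a beta_root.
split=> [u v u_Fq v_Fq uv0 | u v u_Fq v_Fq uv0 g0 d ord_g].
  exact: (gfun_eq0 cardL c_Fq tr_a beta_root u_Fq v_Fq uv0).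
have [|C [cardC cycC coverC]] := mul_orbits_partition ord_g _
  (fmap_line_setD0 cardL c_Fq tr_a beta_root u_Fq v_Fq uv0)
  (mulg_line_setD0 cardL c_Fq tr_a beta_root u_Fq v_Fq uv0 g0).
  by rewrite !inE eqxx.
exists C; split=> //.
have [d_gt0 _ _] := ord_g.
by rewrite subn1 -(card_line_setD0 cardL tr_a beta_root u_Fq v_Fq uv0) -cardC mulnK.
Qed.
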